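(* Let $1\le l\le g$, $\beta\in\mathbb F_p^\times$ and $\alpha=\beta^2$. Then the sequence of polynomial functions $$J^{l,s}(x_1,\dots,x_{n-1})=x_1^{(p^s-1)/2}\,Q^{l,s}(x_2,\dots,x_{n-1}),\qquad s=1,2,\dots,$$ converges uniformly on $D_{\alpha,1}\times D_{0,1}^{n-2}$ to the function $\omega(\beta)\,J^l$, where $J^l(x_1,\dots,x_{n-1})=x_1^{-1/2}\,Q^l(x_2,\dots,x_{n-1})$.
   Context: Let $p$ be an odd prime, $g\ge1$, $n=2g+1$, $p>n$. $\mathbb Z_p$, $|\cdot|_p$ as usual. For $t\in\mathbb F_p$ (or $\mathbb Z_p$), $\omega(t)$ is the Teichmüller representative: the unique $\omega\in\mathbb Z_p$ with $\omega^p=\omega$, $\omega\equiv t\pmod p$. For $\gamma\in\mathbb F_p$, $D_{\gamma,1}=\{t\in\mathbb Z_p:|t-\omega(\gamma)|_p<1\}$. For $\beta\neq0$, $x_1^{1/2}:D_{\alpha,1}\to D_{\beta,1}$ denotes the inverse of the bijection $t\mapsto t^2$, $D_{\beta,1}\to D_{\alpha,1}$, and $x_1^{-1/2}=1/x_1^{1/2}$. Uniform convergence on $S$ means convergence in $\sup_S|\cdot|_p$ (coordinatewise). Binomials $\binom{y}{k}=y(y-1)\cdots(y-k+1)/k!$. For $a=(a_1,\dots,a_{n-1})$ write $X(a)=\prod_{i=2}^{n-2l}x_i^{a_{i-1}}\prod_{i=n-2l+1}^{n-1}x_i^{a_i}$. For a parameter $\mu$ define $Q^{l}[\mu]=(Q_1,\dots,Q_n)$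 by: for $1\le j\le n-2l-1$: $Q_j=x_{j+1}\sum\binom{\mu-1}{a_j}\prod_{i\ne j}\binom{\mu}{a_i}X(a)$ over $a$ with $a_1+\dots+a_{n-2l}=a_{n-2l+1}+\dots+a_{n-1}+l-1$; for $j=n-2l$: $Q_j=\sum\binom{\mu-1}{a_j}\prod_{i\ne j}\binom{\mu}{a_i}X(a)$ with the same condition ($l-1$); for $n-2l<j\le n-1$: $Q_j=\sum\binom{\mu-1}{a_j}\prod_{i\ne j}\binom{\mu}{a_i}X(a)$ over $a$ with $a_1+\dots+a_{n-2l}=a_{n-2l+1}+\dots+a_{n-1}+l$; $Q_n=\sum\prod_{i=1}^{n-1}\binom{\mu}{a_i}X(a)$ over $a$ with $a_1+\dots+a_{n-2l}=a_{n-2l+1}+\dots+a_{n-1}+l$. Here $\prod_{i\ne j}$ is over $i\in\{1,\dots,n-1\}\setminus\{j\}$. $Q^l$ is the formal power series $Q^l[-\tfrac12]$ (sum over all $a\in\mathbb Z_{\ge0}^{n-1}$; it has $p$-adic integer coefficients and converges on $D_{0,1}^{n-2}$), and $Q^{l,s}$ is the polynomial $Q^l[\tfrac{p^s-1}2]$ (sum over $a$ with $0\le a_i\le\frac{p^s-1}2$). *)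

(* p-adic integers are modelled concretely as coherent
   sequences of integer representatives: u : nat -> int with
   u (k+1) = u k (mod p^k); u k is a representative of u mod p^k, and
   |u - v|_p <= p^-k  iff  u k = v k (mod p^k). *)
From mathcomp Require Import all_boot all_algebra.
Set Implicit Arguments. Unset Strict Implicit. Unset Printing Implicit Defensive.
Import GRing.Theory Num.Theory.
Local Open Scope ring_scope.

Definition Zpad := nat -> int.

Definition pw (p k : nat) : int := (p ^ k)%N%:Z.

Definition eqmodp (p k : nat) (u v : Zpad) : bool := (u k == v k %[mod pw p k])%Z.

Definition coherent (p : nat) (u : Zpad) : Prop :=
  forall k, (u k.+1 == u k %[mod pw p k])%Z.

Definition Zeq (p : nat) (u v : Zpad) : Prop := forall k, eqmodp p k u v.

Definition Zmul (u v : Zpad) : Zpad := fun k => u k * v k.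
Definition Zcst (c : int) : Zpad := fun _ => c.

Definition gbin (y : rat) (m : nat) : rat :=
  (\prod_(i < m) (y - i%:R)) / (m`!)%:R.

Definition invmod (d m : int) : int := (egcdz d m).1.

(* the p-adic integer given by a rational with denominator prime to p *)
Definition rat_to_Zp (p : nat) (q : rat) : Zpad :=
  fun k => numq q * invmod (denq q) (pw p k).

(* a multi-index a = (a_1, ..., a_{m}) with entries <= N, from a finfun *)
Definition vec_of (m N : nat) (t : {ffun 'I_m -> 'I_N.+1}) (i : nat) : nat :=
  if i is i'.+1 then oapp (fun o : 'I_m => nat_of_ord (t o)) 0%N (insub i')
  else 0%N.

Definition boxsum (n N : nat) (F : (nat -> nat) -> int) : int :=
  \sum_(t : {ffun 'I_n.-1 -> 'I_N.+1}) F (vec_of t).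

Definition cond (n l c : nat) (a : nat -> nat) : bool :=
  (\sum_(1 <= i < (n - 2 * l).+1) a i == \sum_((n - 2 * l).+1 <= i < n) a i + c)%N.

Definition Xmon (n l : nat) (x : nat -> int) (a : nat -> nat) : int :=
  (\prod_(2 <= i < (n - 2 * l).+1) x i ^+ a i.-1) *
  (\prod_((n - 2 * l).+1 <= i < n) x i ^+ a i).

(* bin 0 m = binom(mu, m), bin 1 m = binom(mu - 1, m) *)
Definition coefQ (n : nat) (bin : nat -> nat -> int) (j : nat) (a : nat -> nat) : int :=
  if (j < n)%N then bin 1%N (a j) * \prod_(1 <= i < n | i != j) bin 0%N (a i)
  else \prod_(1 <= i < n) bin 0%N (a i).

Definition Qterm (n l : nat) (bin : nat -> nat -> int) (x : nat -> int)
    (j : nat) (a : nat -> nat) : int :=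
  let c := if (j <= n - 2 * l)%N then (l - 1)%N else l in
  if cond n l c a then
    (if (j < n - 2 * l)%N then x j.+1 else 1) * coefQ n bin j a * Xmon n l x a
  else 0.

(* Q^{l,s}_j(x_2..x_{n-1}) at level k (x indexed 1..n-1; x_1 unused) *)
Definition Qls (p n l s : nat) (x : nat -> Zpad) (j : nat) : Zpad := fun k =>
  let mu := ((p ^ s).-1)./2 in
  boxsum n mu (Qterm n l (fun e m => ('C(mu - e, m))%:R) (fun i => x i k) j).

Definition Jls (p n l s : nat) (x : nat -> Zpad) (j : nat) : Zpad := fun k =>
  x 1%N k ^+ (((p ^ s).-1)./2) * Qls p n l s x j k.

(* partial sum of the power series Q^l_j = Q^l[-1/2]_j over the box a_i <= N *)
Definition Ql_partial (p n l N : nat) (x : nat -> Zpad) (j : nat) : Zpad := fun k =>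
  boxsum n N (Qterm n l
    (fun e m => rat_to_Zp p (gbin (- (2%:R)^-1 - e%:R) m) k) (fun i => x i k) j).

Definition IsSeriesSum (p n l : nat) (x : nat -> Zpad) (j : nat) (v : Zpad) : Prop :=
  coherent p v /\
  forall k, exists N0, forall N, (N0 <= N)%N -> eqmodp p k (Ql_partial p n l N x j) v.

(* x in D_{alpha,1} x D_{0,1}^{n-2}  (|t - omega(alpha)|_p < 1 iff t = alpha mod p) *)
Definition inD (p n alpha : nat) (x : nat -> Zpad) : Prop :=
  (forall i, (0 < i < n)%N -> coherent p (x i)) /\
  eqmodp p 1 (x 1%N) (Zcst alpha%:Z) /\
  (forall i, (1 < i < n)%N -> eqmodp p 1 (x i) (Zcst 0)).

Definition IsTeich (p b : nat) (w : Zpad) : Prop :=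
  coherent p w /\ Zeq p (fun k => w k ^+ p) w /\ eqmodp p 1 w (Zcst b%:Z).

(* v = x_1^{-1/2} Q^l_j(x_2..x_{n-1}), where x_1^{1/2} is the square root
   lying in D_{b,1} *)
Definition IsJl (p n l b : nat) (x : nat -> Zpad) (j : nat) (v : Zpad) : Prop :=
  coherent p v /\
  exists r y q : Zpad,
    coherent p r /\ coherent p y /\ eqmodp p 1 r (Zcst b%:Z) /\
    Zeq p (Zmul r r) (x 1%N) /\ Zeq p (Zmul r y) (Zcst 1) /\
    IsSeriesSum p n l x j q /\ Zeq p v (Zmul y q).

(* A p-adic integer is a coherent sequence of residues, so every statement is
   a family of congruences between integers modulo p^k. *)
From mathcomp Require Import all_boot all_algebra.
From mathcomp Require Import zify ring.
From Stdlib Require Import FunctionalExtensionality.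
Set Implicit Arguments. Unset Strict Implicit. Unset Printing Implicit Defensive.
Import GRing.Theory Num.Theory.
Local Open Scope ring_scope.

Definition congz (d a b : int) : bool := (d %| a - b)%Z.

Section Congruence.
Variable d : int.

Lemma congz_refl a : congz d a a.
Proof. by rewrite /congz subrr dvdz0. Qed.

Lemma congz_sym a b : congz d a b -> congz d b a.
Proof. by rewrite /congz => h; rewrite -opprB rpredN. Qed.

Lemma congz_trans a b c : congz d a b -> congz d b c -> congz d a c.
Proof.
rewrite /congz => h1 h2; have -> : a - c = (a - b) + (b - c) by rewrite addrA subrK.
exact: rpredD.
Qed.

Lemma congzD a b a' b' : congz d a a' -> congz d b b' -> congz d (a + b) (a' + b').
Proof.
rewrite /congz => h1 h2.
have -> : a + b - (a' + b') = (a - a') + (b - b') by rewrite opprD addrACA.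
exact: rpredD.
Qed.

Lemma congzM a b a' b' : congz d a a' -> congz d b b' -> congz d (a * b) (a' * b').
Proof.
rewrite /congz => h1 h2.
have -> : a * b - a' * b' = a * (b - b') + (a - a') * b'
  by rewrite mulrBr mulrBl addrA subrK.
by apply: rpredD; [apply: dvdz_mull | apply: dvdz_mulr].
Qed.

Lemma congzX a b n : congz d a b -> congz d (a ^+ n) (b ^+ n).
Proof.
move=> h; elim: n => [|n IH]; first exact: congz_refl.
by rewrite !exprS; apply: congzM.
Qed.

Lemma congz0 a : (d %| a)%Z -> congz d a 0.
Proof. by rewrite /congz subr0. Qed.

Lemma congz_sum (I : Type) (r : seq I) (P : pred I) (F G : I -> int) :
  (forall i, P i -> congz d (F i) (G i)) ->
  congz d (\sum_(i <- r | P i) F i) (\sum_(i <- r | P i) G i).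
Proof.
move=> h; apply: (big_rec2 (congz d)); first exact: congz_refl.
by move=> i y1 y2 Pi hy; apply: congzD => //; apply: h.
Qed.

Lemma congz_prod (I : Type) (r : seq I) (P : pred I) (F G : I -> int) :
  (forall i, P i -> congz d (F i) (G i)) ->
  congz d (\prod_(i <- r | P i) F i) (\prod_(i <- r | P i) G i).
Proof.
move=> h; apply: (big_rec2 (congz d)); first exact: congz_refl.
by move=> i y1 y2 Pi hy; apply: congzM => //; apply: h.
Qed.

Lemma congz_prod_nat (m k : nat) (P : pred nat) (F G : nat -> int) :
  (forall i, (m <= i < k)%N -> P i -> congz d (F i) (G i)) ->
  congz d (\prod_(m <= i < k | P i) F i) (\prod_(m <= i < k | P i) G i).
Proof.
move=> h; rewrite big_seq_cond [X in congz d _ X]big_seq_cond.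
by apply: congz_prod => i /andP [hi Pi]; apply: h => //; rewrite -mem_index_iota.
Qed.

End Congruence.

Lemma congz_dvd d d' a b : (d' %| d)%Z -> congz d a b -> congz d' a b.
Proof. by rewrite /congz => h1 h2; apply: dvdz_trans h1 h2. Qed.

Lemma congz1 a b : congz 1 a b.
Proof. by rewrite /congz dvdzE dvd1n. Qed.

Lemma eqmodpE p k (u v : Zpad) : eqmodp p k u v = congz (pw p k) (u k) (v k).
Proof. by rewrite /eqmodp eqz_mod_dvd. Qed.

Lemma coherentP p (u : Zpad) :
  coherent p u <-> forall k, congz (pw p k) (u k.+1) (u k).
Proof. by split=> h k; have := h k; rewrite eqz_mod_dvd. Qed.

Lemma pwD p a b : pw p (a + b) = pw p a * pw p b.
Proof. by rewrite /pw expnD PoszM. Qed.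

Lemma pw_dvd p a b : (a <= b)%N -> (pw p a %| pw p b)%Z.
Proof. by move=> h; rewrite /pw dvdzE /=; apply: dvdn_exp2l. Qed.

Lemma pwS p a : pw p a.+1 = pw p a * p%:Z.
Proof. by rewrite /pw expnS PoszM mulrC. Qed.

Lemma pw1 p : pw p 1 = p%:Z.
Proof. by rewrite /pw expn1. Qed.

Lemma PoszXn (a n : nat) : (a ^ n)%N%:Z = a%:Z ^+ n.
Proof. by rewrite -!natz natrX. Qed.

Lemma coherent_le p (u : Zpad) j k :
  coherent p u -> (j <= k)%N -> congz (pw p j) (u k) (u j).
Proof.
move=> /coherentP hu; elim: k => [|k IH]; first by rewrite leqn0 => /eqP ->; apply: congz_refl.
rewrite leq_eqVlt => /orP [/eqP ->|]; first exact: congz_refl.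
rewrite ltnS => hjk; apply: congz_trans (IH hjk).
by apply: congz_dvd (hu k); apply: pw_dvd.
Qed.

Lemma coherent_mul p (u v : Zpad) : coherent p u -> coherent p v -> coherent p (Zmul u v).
Proof. by move=> /coherentP hu /coherentP hv; apply/coherentP => k; apply: congzM. Qed.

Lemma congz_lift_p p j a b :
  (0 < j)%N -> congz (pw p j) a b -> congz (pw p j.+1) (a ^+ p) (b ^+ p).
Proof.
move=> j0 h; rewrite /congz subrXX pwS; apply: dvdz_mul => //.
have hp : congz p%:Z a b by apply: congz_dvd h; rewrite -pw1; apply: pw_dvd.
have h2 : congz p%:Z (\sum_(i < p) a ^+ (p.-1 - i) * b ^+ i)
                     (\sum_(i < p) b ^+ (p.-1 - i) * b ^+ i).
  by apply: congz_sum => i _; apply: congzM; [apply: congzX | apply: congz_refl].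
have h3 : (p%:Z %| \sum_(i < p) b ^+ (p.-1 - i) * b ^+ i)%Z.
  rewrite (eq_bigr (fun _ => b ^+ p.-1)); last first.
    by move=> i _; rewrite -exprD subnK // -ltnS; case: (p) i => [[]|q].
  by rewrite sumr_const card_ord -mulr_natl natz; apply: dvdz_mulr.
by move: h2; rewrite /congz => h2; have := rpredD h2 h3; rewrite subrK.
Qed.

Lemma congz_lift p s a b :
  congz p%:Z a b -> congz (pw p s.+1) (a ^+ (p ^ s)) (b ^+ (p ^ s)).
Proof.
move=> h; elim: s => [|s IH]; first by rewrite expn0 !expr1 pw1.
by rewrite expnSr !exprM; apply: congz_lift_p.
Qed.

Lemma fermat_congz p (a : nat) : prime p -> congz p%:Z (a%:Z ^+ p) a%:Z.
Proof.
move=> pp; rewrite /congz -eqz_mod_dvd -PoszXn !modz_nat; apply/eqP; congr Posz.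
exact: fermat_little.
Qed.

Lemma frobenius_lift p k (c : int) : congz p%:Z (c ^+ p) c ->
  congz (pw p k.+1) (c ^+ (p ^ k.+1)) (c ^+ (p ^ k)).
Proof. by move=> h; have := congz_lift k h; rewrite -exprM -expnS. Qed.

Lemma fermat_unit p b : prime p -> ~~ (p %| b)%N -> congz p%:Z (b%:Z ^+ p.-1) 1.
Proof.
move=> pp pb; have hcop : coprimez p%:Z b%:Z by rewrite coprimezE /= prime_coprime.
rewrite /congz -(Gauss_dvdzr _ hcop) mulrBr mulr1 -exprS prednK ?prime_gt0 //.
exact: fermat_congz.
Qed.

Definition inv_modp (p b : nat) : int := (b ^ (p - 2))%N%:Z.

Lemma inv_modpP p b : prime p -> ~~ (p %| b)%N -> congz p%:Z (b%:Z * inv_modp p b) 1.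
Proof.
move=> pp pb; have p1 := prime_gt1 pp.
have -> : b%:Z * inv_modp p b = b%:Z ^+ p.-1.
  by rewrite /inv_modp -PoszXn -PoszM -expnS; congr (Posz (_ ^ _)); lia.
exact: fermat_unit.
Qed.

Definition teich (p b : nat) : Zpad := fun k => b%:Z ^+ (p ^ k).

Lemma teich_step p b k : prime p ->
  congz (pw p k.+1) (teich p b k.+1) (teich p b k).
Proof. by move=> pp; apply: frobenius_lift; apply: fermat_congz. Qed.

Lemma teichP p b : prime p -> IsTeich p b (teich p b).
Proof.
move=> pp; split; [|split].
- by apply/coherentP => k; apply: congz_dvd (teich_step b k pp); apply: pw_dvd.
- move=> k; rewrite eqmodpE /teich -exprM -expnSr.
  by apply: congz_dvd (teich_step b k pp); apply: pw_dvd.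
- by rewrite eqmodpE pw1 /teich expn1; apply: fermat_congz.
Qed.

Definition mu (p s : nat) : nat := ((p ^ s).-1)./2.

Lemma odd_split m : odd m -> m = (m./2).*2.+1.
Proof. by move=> om; rewrite -{1}(odd_double_half m) om. Qed.

Lemma muP p s : odd p -> (1 + 2 * mu p s = p ^ s)%N.
Proof.
move=> op; have oP : odd (p ^ s) by rewrite oddX op orbT.
have hP := odd_split oP.
rewrite /mu {1}hP /= doubleK [in RHS]hP -muln2; lia.
Qed.

Lemma mu_step p s : odd p -> mu p s.+1 = (mu p s + p ^ s * p./2)%N.
Proof.
move=> op; have h1 := muP s op; have h2 := muP s.+1 op.
have hp : p = (2 * p./2 + 1)%N by rewrite {1}(odd_split op) -muln2; lia.
rewrite -h1 expnSr -h1 in h2 *; nia.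
Qed.

Lemma mu1 p : odd p -> mu p 1 = p./2.
Proof. by move=> op; have := muP 1 op; rewrite expn1 {2}(odd_split op) -muln2; lia. Qed.

(* mu_s >= s, so for large s the box 0 <= a_i <= mu_s contains any fixed box. *)
Lemma mu_ge p s : (3 <= p)%N -> (s <= mu p s)%N.
Proof.
move=> p3; rewrite /mu geq_half_double.
suff : (2 * s + 1 <= p ^ s)%N by rewrite -muln2; lia.
elim: s => [|s IH]; first by rewrite expn0.
rewrite expnS; nia.
Qed.

Lemma pow_mu_cong p k s (T : int) : odd p -> congz p%:Z (T ^+ p./2) 1 -> (k <= s)%N ->
  congz (pw p k) (T ^+ mu p s) (T ^+ mu p k).
Proof.
move=> op h; elim: s => [|s IH]; first by rewrite leqn0 => /eqP ->; apply: congz_refl.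
rewrite leq_eqVlt => /orP [/eqP ->|]; first exact: congz_refl.
rewrite ltnS => hks; apply: congz_trans (IH hks).
rewrite mu_step // exprD mulnC exprM -[X in congz _ _ X]mulr1.
apply: congzM; first exact: congz_refl.
have hlift := congz_lift s h; rewrite expr1n in hlift.
by apply: congz_dvd hlift; apply: pw_dvd; apply: leqW.
Qed.

Section SquareRoot.
Variables (p b : nat) (t : Zpad).
Hypotheses (p_prime : prime p) (p_odd : odd p) (b_unit : ~~ (p %| b)%N).
Hypotheses (t_coh : coherent p t) (t_res : congz p%:Z (t 1%N) (b%:Z ^+ 2)).

Local Notation c := b%:Z.
Local Notation g := (inv_modp p b).

Let cg_unit : congz p%:Z (c * g) 1 := inv_modpP p_prime b_unit.
Let g_fermat : congz p%:Z (g ^+ p) g := fermat_congz _ p_prime.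

(* y_k = g^{p^k} t_k^{mu_k}: the inverse of the square root of t lying
   over c, and r = t y that square root. *)
Definition invsqrt : Zpad := fun k => g ^+ (p ^ k) * t k ^+ mu p k.
Definition sqrtZ : Zpad := fun k => t k * invsqrt k.

Lemma t_res_all k : (0 < k)%N -> congz p%:Z (t k) (c ^+ 2).
Proof. by move=> k0; apply: congz_trans t_res; rewrite -pw1; apply: coherent_le. Qed.

Lemma t_euler k : (0 < k)%N -> congz p%:Z (t k ^+ p./2) 1.
Proof.
move=> k0; apply: congz_trans (fermat_unit p_prime b_unit).
have -> : p.-1 = (2 * p./2)%N by rewrite {1}(odd_split p_odd) /= mul2n.
by rewrite exprM; apply: congzX; apply: t_res_all.
Qed.

(* r y = t^{1 + 2 mu_k} g^{2 p^k} = (t g^2)^{p^k} = 1 (mod p^k): y inverts r. *)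
Lemma sqrt_mul_inv k : congz (pw p k) (sqrtZ k * invsqrt k) 1.
Proof.
case: k => [|k]; first exact: congz1.
have -> : sqrtZ k.+1 * invsqrt k.+1 =
          (g ^+ (p ^ k.+1)) ^+ 2 * t k.+1 ^+ (1 + 2 * mu p k.+1)%N.
  by rewrite /sqrtZ /invsqrt exprD mulnC exprM expr1; ring.
rewrite muP //; apply: congz_dvd (pw_dvd p (leqnSn k.+1)) _.
apply: congz_trans (congzM (congz_refl _ _) (congz_lift k.+1 (t_res_all (k := k.+1) isT))) _.
have -> : g ^+ (p ^ k.+1) ^+ 2 * c ^+ 2 ^+ (p ^ k.+1) = ((c * g) ^+ (p ^ k.+1)) ^+ 2.
  by rewrite -!exprM mulnC exprMn mulrC.
by have := congzX 2 (congz_lift k.+1 cg_unit); rewrite !expr1n.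
Qed.

Lemma invsqrt_coherent : coherent p invsqrt.
Proof.
apply/coherentP => -[|k]; first exact: congz1.
apply: congzM.
  by apply: congz_dvd (frobenius_lift k.+1 g_fermat); apply: pw_dvd.
apply: congz_trans (_ : congz _ _ (t k.+1 ^+ mu p k.+2)) _.
  by apply: congzX; move/coherentP: t_coh.
by apply: congz_dvd (pow_mu_cong p_odd (t_euler (k := k.+1) isT) (leqnSn _)); apply: pw_dvd.
Qed.

Lemma sqrt_coherent : coherent p sqrtZ.
Proof. exact: (coherent_mul t_coh invsqrt_coherent). Qed.

Lemma sqrt_res : congz p%:Z (sqrtZ 1%N) c.
Proof.
rewrite /sqrtZ /invsqrt expn1 mu1 //.
apply: congz_trans (_ : congz _ _ (c ^+ 2 * (g * 1))) _.
  by apply: congzM; [exact: t_res | apply: congzM; [exact: g_fermat | exact: t_euler]].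
rewrite mulr1 expr2 -mulrA -[X in congz _ _ X]mulr1.
by apply: congzM => //; apply: congz_refl.
Qed.

(* ...and a square root of t, since r r = t (r y). *)
Lemma sqrt_sq : Zeq p (Zmul sqrtZ sqrtZ) t.
Proof.
move=> k; rewrite eqmodpE /Zmul.
have -> : sqrtZ k * sqrtZ k = t k * (sqrtZ k * invsqrt k) by rewrite /sqrtZ; ring.
by rewrite -[X in congz _ _ X]mulr1; apply: congzM; [exact: congz_refl | exact: sqrt_mul_inv].
Qed.

(* x_1^{mu_s} = c^{p^k} y_k (mod p^k) for s >= k: the source of omega(beta). *)
Lemma pow_mu_limit k s : (k <= s)%N ->
  congz (pw p k) (t k ^+ mu p s) (c ^+ (p ^ k) * invsqrt k).
Proof.
case: k => [|k] hks; first exact: congz1.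
apply: congz_trans (pow_mu_cong p_odd (t_euler (k := k.+1) isT) hks) _.
rewrite /invsqrt mulrA -exprMn -[X in congz _ X _]mul1r.
apply: congzM; last exact: congz_refl.
apply: congz_sym; have := congz_lift k.+1 cg_unit; rewrite expr1n.
by apply: congz_dvd; apply: pw_dvd.
Qed.

End SquareRoot.

Definition binq (e m : nat) : rat := gbin (- (2%:R)^-1 - e%:R) m.

Lemma binq_scaled e m :
  binq e m * ((2 ^ m * m`!)%N)%:R = (\prod_(i < m) - (1 + 2 * e + 2 * i)%N%:Z)%:~R.
Proof.
rewrite /binq /gbin natrM (mulrC (2 ^ m)%:R) mulrA.
have f0 : (m`!)%:R != 0 :> rat by rewrite pnatr_eq0 -lt0n fact_gt0.
rewrite divfK // mulrC rmorph_prod.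
have -> : (2 ^ m)%:R = \prod_(i < m) (2 : rat) by rewrite prodr_const card_ord natrX.
rewrite -big_split /=; apply: eq_bigr => i _.
by rewrite rmorphN /=; field.
Qed.

Lemma binq_num e m :
  numq (binq e m) * ((2 ^ m * m`!)%N)%:Z =
  denq (binq e m) * \prod_(i < m) - (1 + 2 * e + 2 * i)%N%:Z.
Proof.
apply: (@intr_inj rat); rewrite !rmorphM /= numqE.
have -> : ((2 ^ m)%N%:~R * m`!%:~R : rat) = ((2 ^ m * m`!)%N)%:R by rewrite natrM.
rewrite -binq_scaled; ring.
Qed.

Lemma binomial_scaled N m :
  ('C(N, m))%:Z * ((2 ^ m * m`!)%N)%:Z = \prod_(i < m) ((2 * (N - i))%N)%:Z.
Proof.
rewrite -PoszM mulnCA bin_ffact ffact_prod.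
have -> : (2 ^ m = \prod_(i < m) 2)%N by rewrite prod_nat_const card_ord.
by rewrite -big_split /= -!natz natr_prod; apply: eq_bigr => i _; exact: natz.
Qed.

(* The scaled factors 2(N - i) and -(1 + 2e + 2i) differ by 2N + 1 + 2e = p^s,
   so the scaled binomials agree mod p^s. *)
Lemma binomial_scaled_congz p s e m : odd p -> (m + e <= mu p s)%N ->
  (pw p s %| (('C(mu p s - e, m))%:Z * denq (binq e m) - numq (binq e m))
              * ((2 ^ m * m`!)%N)%:Z)%Z.
Proof.
move=> op hm; set N := (mu p s - e)%N.
have hN : (2 * N + 1 + 2 * e = p ^ s)%N by rewrite -(muP s op) /N; lia.
rewrite mulrBl -mulrA (mulrC (denq _)) mulrA binomial_scaled binq_num.
rewrite (mulrC (\prod_(i < m) _)) -mulrBr; apply: dvdz_mull.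
apply: (@congz_prod (pw p s) _ (index_enum 'I_m) xpredT) => i _.
have hi : (i < m)%N by [].
by rewrite /congz (_ : _ - _ = pw p s) ?dvdzz // /pw -hN; lia.
Qed.

(* Dividing out D costs at most v_p(D) < D factors of p. *)
Lemma dvd_cancel_small p s k (X : int) (D : nat) : prime p -> (0 < D)%N ->
  (k + D <= s)%N -> (pw p s %| X * D%:Z)%Z -> (pw p k %| X)%Z.
Proof.
move=> pp D0 hs h; have [->|X0] := eqVneq X 0; first exact: dvdz0.
move: h; rewrite /pw !dvdzE abszM /= => h.
have Xp : (0 < `|X|)%N by rewrite absz_gt0.
rewrite pfactor_dvdn //; move: h; rewrite pfactor_dvdn ?muln_gt0 ?Xp ?D0 // lognM //.
have : (logn p D < D)%N.
  apply: (@leq_trans (p ^ logn p D)); first exact: ltn_expl (prime_gt1 pp).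
  by apply: dvdn_leq => //; apply: pfactor_dvdnn.
lia.
Qed.

Lemma odd_prime_ge3 p : prime p -> odd p -> (3 <= p)%N.
Proof. by move=> pp; have := prime_gt1 pp; case: p pp => [|[|[|q]]]. Qed.

Lemma fact_scale_gt0 m : (0 < 2 ^ m * m`!)%N.
Proof. by rewrite muln_gt0 expn_gt0 fact_gt0. Qed.

(* binom(-1/2 - e, m) is p-integral: otherwise p would divide its numerator. *)
Lemma binq_den_coprime p e m : prime p -> odd p -> coprime `|denq (binq e m)| p.
Proof.
move=> pp op; set s := (2 ^ m * m`! + m + e + 1)%N.
have hs : (m + e <= mu p s)%N by apply: leq_trans (mu_ge s (odd_prime_ge3 pp op)); lia.
have hX : (p%:Z %| 'C(mu p s - e, m)%:Z * denq (binq e m) - numq (binq e m))%Z.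
  have hs1 : (1 + 2 ^ m * m`! <= s)%N by rewrite /s; lia.
  rewrite -pw1; exact: dvd_cancel_small pp (fact_scale_gt0 m) hs1 (binomial_scaled_congz op hs).
rewrite coprime_sym prime_coprime //; apply/negP => hd.
have hn : (p%:Z %| numq (binq e m))%Z.
  have hd' : (p%:Z %| 'C(mu p s - e, m)%:Z * denq (binq e m))%Z by apply: dvdz_mull.
  by have := rpredB hd' hX; rewrite opprB addrC subrK.
have := coprime_num_den (binq e m); rewrite /coprime => /eqP hg.
have : (p %| gcdn `|numq (binq e m)| `|denq (binq e m)|)%N by rewrite dvdn_gcd hd andbT.
by rewrite hg dvdn1 => /eqP p1; rewrite p1 in pp.
Qed.

Lemma invmodP p k (d : int) : coprime `|d| p ->
  (pw p k %| invmod d (pw p k) * d - 1)%Z.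
Proof.
move=> cd; rewrite /invmod; case: egcdzP => u v /= h _.
have g1 : gcdz d (pw p k) = 1.
  by rewrite /gcdz /pw /=; have := coprimeXr k cd; rewrite /coprime => /eqP ->.
move: h; rewrite g1 => h.
have -> : u * d - 1 = - v * pw p k by rewrite -h; ring.
by apply: dvdz_mull; apply: dvdzz.
Qed.

Lemma rat_to_Zp_coherent p (q : rat) : coprime `|denq q| p -> coherent p (rat_to_Zp p q).
Proof.
move=> cd; apply/coherentP => k; rewrite /congz /rat_to_Zp.
have h1 := invmodP k cd.
have h2 : (pw p k %| invmod (denq q) (pw p k.+1) * denq q - 1)%Z.
  by apply: dvdz_trans (invmodP k.+1 cd); apply: pw_dvd.
set u := invmod _ (pw p k) in h1 *; set u' := invmod _ _ in h2 *.
have -> : numq q * u' - numq q * u =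
          numq q * ((u' * denq q - 1) * u - u' * (u * denq q - 1)) by ring.
by apply: dvdz_mull; apply: rpredB; [apply: dvdz_mulr | apply: dvdz_mull].
Qed.

Lemma binq_congz p k s e m : prime p -> odd p ->
  (k + 2 ^ m * m`! <= s)%N -> (m + e <= mu p s)%N ->
  congz (pw p k) ('C(mu p s - e, m))%:Z (rat_to_Zp p (binq e m) k).
Proof.
move=> pp op hs hm.
have hX := dvd_cancel_small pp (fact_scale_gt0 m) hs (binomial_scaled_congz op hm).
have hu := invmodP k (binq_den_coprime e m pp op).
rewrite /congz /rat_to_Zp.
set C := ('C(_, _))%:Z in hX *; set u := invmod _ _ in hu *.
set d := denq _ in hX hu *; set n := numq _ in hX *.
have -> : C - n * u = (C * d - n) * u - C * (u * d - 1) by ring.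
by apply: rpredB; [apply: dvdz_mulr | apply: dvdz_mull].
Qed.

Lemma vec_ofS m N (t : {ffun 'I_m -> 'I_N.+1}) (i : 'I_m) : vec_of t i.+1 = t i.
Proof.
rewrite /vec_of; case: insubP => [o _ /= ho|]; last by rewrite ltn_ord.
by rewrite (val_inj ho).
Qed.

Lemma vec_of_le m N (t : {ffun 'I_m -> 'I_N.+1}) i : (vec_of t i <= N)%N.
Proof. by case: i => [|i] //=; case: insubP => [o _ _|_] //=; rewrite -ltnS. Qed.

Lemma boxsum_congz d n N F G :
  (forall t : {ffun 'I_n.-1 -> 'I_N.+1}, congz d (F (vec_of t)) (G (vec_of t))) ->
  congz d (boxsum n N F) (boxsum n N G).
Proof. by move=> h; apply: congz_sum => t _; apply: h. Qed.

Lemma boxsum_trunc d n M N F : (M <= N)%N ->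
  (forall t : {ffun 'I_n.-1 -> 'I_N.+1},
     ~~ [forall i, t i <= M]%N -> (d %| F (vec_of t))%Z) ->
  congz d (boxsum n N F) (boxsum n M F).
Proof.
move=> hMN h; rewrite /boxsum.
rewrite (bigID (fun t : {ffun 'I_n.-1 -> 'I_N.+1} => [forall i, t i <= M]%N)) /=.
rewrite -[X in congz d _ X]addr0; apply: congzD; last first.
  by apply: congz0; apply: rpred_sum => t ht; apply: h.
have hw : (M.+1 <= N.+1)%N by rewrite ltnS.
pose widen (t : {ffun 'I_n.-1 -> 'I_M.+1}) : {ffun 'I_n.-1 -> 'I_N.+1} :=
  [ffun i => widen_ord hw (t i)].
pose narrow (u : {ffun 'I_n.-1 -> 'I_N.+1}) : {ffun 'I_n.-1 -> 'I_M.+1} :=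
  [ffun i => inord (u i)].
rewrite (reindex_onto widen narrow); last first.
  move=> u /forallP hu; apply/ffunP => i; rewrite !ffunE; apply: val_inj => /=.
  by rewrite inordK // ltnS hu.
have vec_widen t : vec_of (widen t) = vec_of t.
  apply: functional_extensionality => -[|i] //=.
  by rewrite /vec_of; case: (insub i) => [o|] //=; rewrite ffunE.
under eq_bigr => t _ do rewrite vec_widen.
rewrite (eq_bigl (fun _ => true)); first exact: congz_refl.
move=> t /=; apply/andP; split; first by apply/forallP => i; rewrite ffunE /= -ltnS.
by apply/eqP/ffunP => i; rewrite !ffunE inord_val.
Qed.

Lemma Qterm_congz d n l bin bin' x x' j a M : (0 < l)%N ->
  (forall i, (0 < i < n)%N -> congz d (x i) (x' i)) ->
  (forall e m, (e <= 1)%N -> (m <= M)%N -> congz d (bin e m) (bin' e m)) ->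
  (forall i, (a i <= M)%N) ->
  congz d (Qterm n l bin x j a) (Qterm n l bin' x' j a).
Proof.
move=> l0 hx hb ha; rewrite /Qterm; case: ifP => _; last exact: congz_refl.
apply: congzM; [apply: congzM|].
- by case: ifP => hj; [apply: hx; lia | apply: congz_refl].
- rewrite /coefQ; case: ifP => _; last by apply: congz_prod_nat => i _ _; apply: hb.
  by apply: congzM; [apply: hb | apply: congz_prod_nat => i _ _; apply: hb].
- rewrite /Xmon; apply: congzM; apply: congz_prod_nat => i hi _.
  all: by apply: congzX; apply: hx; lia.
Qed.

Lemma leq_sum_nat_term (a : nat -> nat) m k i : (m <= i < k)%N ->
  (a i <= \sum_(m <= j < k) a j)%N.
Proof.
move=> /andP [h1 h2]; rewrite (big_cat_nat (n := i)) /=; [|lia|lia].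
rewrite (@big_ltn _ _ _ i); lia.
Qed.

(* If x_i = 0 (mod p) for i >= 2, a term of Q whose multi-index has an entry
   a_i > k + l is divisible by p^k: the constraint defining Q forces
   a_{n-2l+1} + ... + a_{n-1} >= k, and X(a) contains those powers. *)
Lemma Qterm_small p k n l bin x j a :
  (2 * l < n)%N -> (forall i, (1 < i < n)%N -> (p%:Z %| x i)%Z) ->
  (exists2 i, (0 < i < n)%N & (k + l < a i)%N) ->
  (pw p k %| Qterm n l bin x j a)%Z.
Proof.
move=> ln hx [i hi hai]; rewrite /Qterm.
case: ifP => hc; last exact: dvdz0.
apply: dvdz_mull; rewrite /Xmon; apply: dvdz_mull.
set R := (\sum_((n - 2 * l).+1 <= i < n) a i)%N.
have hR : (k <= R)%N.
  move: hc; rewrite /cond => /eqP hc.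
  have hcl : ((if (j <= n - 2 * l)%N then (l - 1)%N else l) <= l)%N by case: ifP; lia.
  case: (leqP i (n - 2 * l)) => hi2.
    by have := leq_sum_nat_term a (m := 1) (k := (n - 2 * l).+1) (i := i); rewrite hc -/R; lia.
  by have := leq_sum_nat_term a (m := (n - 2 * l).+1) (k := n) (i := i); rewrite -/R; lia.
apply: dvdz_trans (pw_dvd p hR) _.
rewrite /R !big_seq.
apply: (big_rec2 (fun s (y : int) => (pw p s %| y)%Z)) => // i' s y hi' hy.
rewrite pwD; apply: dvdz_mul => //.
rewrite /pw PoszXn; apply: dvdz_exp2r; apply: hx.
by move: hi'; rewrite mem_index_iota; lia.
Qed.

Lemma Qbox_trunc p n l bin (x : nat -> int) j K M N :
  (2 * l < n)%N -> (forall i, (1 < i < n)%N -> (p%:Z %| x i)%Z) ->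
  (K + l <= M)%N -> (M <= N)%N ->
  congz (pw p K) (boxsum n N (Qterm n l bin x j)) (boxsum n M (Qterm n l bin x j)).
Proof.
move=> ln hx hK hMN; apply: boxsum_trunc => // t /forallPn [i hi].
apply: Qterm_small => //; exists i.+1; first by have := ltn_ord i; lia.
by rewrite vec_ofS; rewrite -ltnNge in hi; lia.
Qed.

Lemma Qbox_congz d n l bin bin' (x x' : nat -> int) j M : (0 < l)%N ->
  (forall i, (0 < i < n)%N -> congz d (x i) (x' i)) ->
  (forall e m, (e <= 1)%N -> (m <= M)%N -> congz d (bin e m) (bin' e m)) ->
  congz d (boxsum n M (Qterm n l bin x j)) (boxsum n M (Qterm n l bin' x' j)).
Proof.
move=> l0 hx hb; apply: boxsum_congz => t.
by apply: (@Qterm_congz _ _ _ _ _ _ _ _ _ M l0 hx hb) => i; apply: vec_of_le.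
Qed.

Definition Q_index (k l : nat) : nat := (k + 2 ^ (k + l) * (k + l)`! + (k + l) + 1)%N.

Section PowerSeries.
Variables (p n l : nat) (x : nat -> Zpad).
Hypotheses (p_prime : prime p) (p_odd : odd p) (l_gt0 : (0 < l)%N)
  (l_small : (2 * l < n)%N).
Hypotheses (x_coh : forall i, (0 < i < n)%N -> coherent p (x i))
  (x_small : forall i, (1 < i < n)%N -> eqmodp p 1 (x i) (Zcst 0)).

Definition Qsum (j : nat) : Zpad := fun k => Ql_partial p n l (k + l) x j k.

Lemma x_small_dvd k i : (0 < k)%N -> (1 < i < n)%N -> (p%:Z %| x i k)%Z.
Proof.
move=> k0 hi; have h1 : congz (pw p 1) (x i k) (x i 1%N).
  by apply: coherent_le => //; apply: x_coh; lia.
have h2 := x_small hi; rewrite eqmodpE in h2.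
by have := congz_trans h1 h2; rewrite pw1 /Zcst /congz subr0.
Qed.

(* Shrinking the box from k + l + 1 to k + l and reducing mod p^k is harmless. *)
Lemma Qsum_coherent j : coherent p (Qsum j).
Proof.
apply/coherentP => k; rewrite /Qsum /Ql_partial.
apply: congz_trans.
  apply: (@Qbox_trunc p n l _ _ j k (k + l)%N) => //; try lia.
  by move=> i hi; apply: x_small_dvd.
apply: Qbox_congz => // [i hi|e m _ _]; first by have /coherentP := x_coh hi.
by have /coherentP := rat_to_Zp_coherent (binq_den_coprime e m p_prime p_odd).
Qed.

(* Qsum is the p-adic sum of the series: partial sums over larger boxes agree. *)
Lemma Qsum_series j : IsSeriesSum p n l x j (Qsum j).
Proof.
split; first exact: Qsum_coherent.
move=> k; exists (k + l)%N => N hN; rewrite eqmodpE /Qsum.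
case: k hN => [|k] hN; first exact: congz1.
by apply: Qbox_trunc => // i hi; apply: x_small_dvd.
Qed.

Lemma Qls_limit j k s : (Q_index k l <= s)%N -> congz (pw p k) (Qls p n l s x j k) (Qsum j k).
Proof.
case: k => [|k] hs; first exact: congz1.
have hmu := mu_ge s (odd_prime_ge3 p_prime p_odd).
rewrite /Qls /Qsum /Ql_partial /Q_index in hs *; apply: congz_trans.
  apply: (@Qbox_trunc p n l _ _ j k.+1 (k.+1 + l)%N) => //.
  - by move=> i hi; apply: x_small_dvd.
  - by rewrite /mu in hmu; lia.
apply: Qbox_congz => // [i _|e m he hm]; first exact: congz_refl.
rewrite natz; apply: binq_congz => //; last by lia.
have : (2 ^ m * m`! <= 2 ^ (k.+1 + l) * (k.+1 + l)`!)%N.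
  by apply: leq_mul; [apply: leq_pexp2l | apply: leq_fact].
lia.
Qed.

End PowerSeries.

Section Convergence.
Variables (p n l b alpha : nat).
Hypotheses (p_prime : prime p) (p_odd : odd p) (l_gt0 : (0 < l)%N)
  (l_small : (2 * l < n)%N).
Hypotheses (b_unit : ~~ (p %| b)%N) (alpha_sq : congz p%:Z alpha%:Z (b%:Z ^+ 2)).

Definition Jl (x : nat -> Zpad) (j : nat) : Zpad :=
  Zmul (invsqrt p b (x 1%N)) (Qsum p n l x j).

Variable x : nat -> Zpad.
Hypothesis x_in : inD p n alpha x.

Let x_coh : forall i, (0 < i < n)%N -> coherent p (x i).
Proof. by case: x_in. Qed.

Let x_small : forall i, (1 < i < n)%N -> eqmodp p 1 (x i) (Zcst 0).
Proof. by case: x_in => _ []. Qed.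

Let x1_coh : coherent p (x 1%N).
Proof. by apply: x_coh; lia. Qed.

Let x1_res : congz p%:Z (x 1%N 1%N) (b%:Z ^+ 2).
Proof. by case: x_in => _ [h1 _]; rewrite eqmodpE pw1 in h1; apply: congz_trans h1 _. Qed.

Lemma Jl_spec j : IsJl p n l b x j (Jl x j).
Proof.
have r_res : eqmodp p 1 (sqrtZ p b (x 1%N)) (Zcst b%:Z).
  by rewrite eqmodpE pw1; apply: sqrt_res.
have r_inv : Zeq p (Zmul (sqrtZ p b (x 1%N)) (invsqrt p b (x 1%N))) (Zcst 1).
  by move=> k; rewrite eqmodpE; apply: sqrt_mul_inv.
split; first by apply: coherent_mul; [apply: invsqrt_coherent | apply: Qsum_coherent].
exists (sqrtZ p b (x 1%N)), (invsqrt p b (x 1%N)), (Qsum p n l x j).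
split; first by apply: sqrt_coherent.
split; first by apply: invsqrt_coherent.
split; first exact: r_res.
split; first by apply: sqrt_sq.
split; first exact: r_inv.
split; first by apply: Qsum_series.
by move=> k; rewrite eqmodpE; apply: congz_refl.
Qed.

Lemma Jls_limit j k s : (Q_index k l <= s)%N ->
  eqmodp p k (Jls p n l s x j) (Zmul (teich p b) (Jl x j)).
Proof.
move=> hs; rewrite eqmodpE /Jls /Zmul mulrA -/(mu p s).
apply: congzM; last by apply: Qls_limit.
by apply: pow_mu_limit => //; rewrite /Q_index in hs; lia.
Qed.

End Convergence.

Lemma Fp_unit p (beta : 'F_p) : prime p -> beta != 0 -> ~~ (p %| beta)%N.
Proof.
move=> pp b0; have bp : (beta < p)%N by rewrite -[X in (_ < X)%N](Fp_cast pp).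
have bn0 : (beta : nat) != 0%N by apply: contra b0 => /eqP h; apply/eqP/val_inj.
by apply/negP => /dvdn_leq; rewrite lt0n bn0 => /(_ isT); lia.
Qed.

Lemma Fp_sqr p (beta : 'F_p) : prime p ->
  congz p%:Z (nat_of_ord (beta ^+ 2))%:Z ((nat_of_ord beta)%:Z ^+ 2).
Proof.
move=> pp; have -> : nat_of_ord (beta ^+ 2) = (beta * beta %% p)%N.
  by rewrite expr2 /=; move: (nat_of_ord beta) => b; rewrite Fp_cast.
by rewrite expr2 -PoszM /congz -eqz_mod_dvd -modz_nat modz_mod.
Qed.

Unset Implicit Arguments.
Theorem theorem10p5 (p g l : nat) (beta : 'F_p) :
  prime p -> odd p -> (0 < g)%N -> ((2 * g).+1 < p)%N ->
  (1 <= l <= g)%N -> beta != 0 ->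
  exists (w : Zpad) (J : (nat -> Zpad) -> nat -> Zpad),
    [/\ IsTeich p beta w,
        (forall x, inD p (2 * g).+1 (beta ^+ 2) x ->
           forall j, (1 <= j <= (2 * g).+1)%N ->
           IsJl p (2 * g).+1 l beta x j (J x j)) &
        (forall k, exists S, forall s, (S <= s)%N -> (0 < s)%N ->
           forall x, inD p (2 * g).+1 (beta ^+ 2) x ->
           forall j, (1 <= j <= (2 * g).+1)%N ->
           eqmodp p k (Jls p (2 * g).+1 l s x j) (Zmul w (J x j)))].
Proof.
move=> pp op _ _ /andP [l_gt0 l_le] b0.
have l_small : (2 * l < (2 * g).+1)%N by lia.
have b_unit := Fp_unit pp b0; have alpha_sq := Fp_sqr beta pp.
exists (teich p beta), (Jl p (2 * g).+1 l beta); split.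
- exact: teichP.
- by move=> x hx j _; apply: Jl_spec hx _.
- by move=> k; exists (Q_index k l) => s hs _ x hx j _; apply: Jls_limit hx _ _ _ hs.
Qed.
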